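(* Fix $x\in\mathbb X$ and $\Lambda\Subset\mathbb X\setminus\{x\}$, a total order $\preceq$ on $\mathbf F(x)$, a set $\mathbf E\subset\mathbf F(x)$ with $\mathbf E\supset\{X\in\mathbf F(x)\mid W(X)\neq1,\ X\setminus\{x\}\subset\Lambda\}$, and for each $X\in\mathbf F(x)$ a total order (also denoted $\preceq$) on $X'$, with $X'_{\prec x'}=\{x''\in X'\mid x''\prec x'\}$ for $x'\in X'$. Suppose that $Z(\Lambda)\neq0$ and, unless $z(x)W(x)=0$, assume also that \[ Z_X(\Lambda\setminus\{x'\}\mid X'_{\prec x'})\neq0\quad\text{and}\quad \widehat z_X(x',\Lambda\setminus\{x'\}\mid X'_{\prec x'})\neq-1 \] for all $X\in\mathbf E$ and $x'\in X'$. Then \[ \widehat z(x,\Lambda)=z(x)\prod_{X\in\mathbf F(x):\,X'\subset\Lambda}\left(1+(W(X)-1)\prod_{x'\in X'}\frac{\widehat z_X(x',\Lambda\setminus\{x'\}\mid X'_{\prec x'})}{1+\widehat z_X(x',\Lambda\setminus\{x'\}\mid X'_{\prec x'})}\right). \]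
   Context: $\mathbb X$ is a finite or countably infinite set, $X\Subset\mathbb X$ means finite subset, $\mathbf F$ is the set of finite subsets of $\mathbb X$. Fix $z:\mathbb X\to\mathbb C$, $W:\mathbf F\to\mathbb C$; $f^X=\prod_{y\in X}f(y)$, $W(x)=W(\{x\})$; singletons $\{x\}$ are written $x$ inside arguments. For an interaction $V:\mathbf F\to\mathbb C$, the conditional interaction is $V(X\mid B)=\prod_{C\subset B}V(X\cup C)$ if $X\cap B=\varnothing$, $V(X\mid B)=0$ if $X=\{y\}$ with $y\in B$, and $V(X\mid B)=1$ otherwise; the Boltzmann factor is $\kappa(X\mid B)=\prod_{\varnothing\neq S\subset X}V(S\mid B)$; partition functions are $Z(X,\Lambda\mid B)=\sum_{Y\subset\Lambda\setminus X}z^{X\cup Y}\kappa(X\cup Y\mid B)$, $Z(\Lambda\mid B)=Z(\varnothing,\Lambda\mid B)$, with $B$ omitted when $B=\varnothing$; correlations $R(X,\Lambda\mid B)=Z(X,\Lambda\mid B)/Z(\Lambda\mid B)$ when the denominator is nonzero, and effective activities $\widehat z(y,\Lambda\mid B)=R(\{y\},\Lambda\mid B)$ for $y\notin\Lambda$. Unadorned $\kappa,Z,R,\widehat z$ refer to $V=W$. Let $\mathbf F(x)=\{X\Subset\mathbb X\mid x\in X\}$ and $X'=X\setminus\{x\}$. Given the total order $\preceq$ on $\mathbf F(x)$ (strict part $\prec$) and $X\in\mathbf F(x)$, define $W_X:\mathbf F\to\mathbb C$ by $W_X(Y)=W(Y)W(\{x\}\cup Y)$ if $x\notin Y$ and $\{x\}\cup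 Y\prec X$; $W_X(Y)=1$ if $x\in Y$ and $Y\neq X$; $W_X(Y)=W(Y)$ otherwise. Quantities built from $V=W_X$ are written $\kappa_X,Z_X,R_X,\widehat z_X$. Convention: a product is set equal to $0$ if at least one factor is well defined and equals $0$, even if other factors are ill-defined. *)

From mathcomp Require Import all_boot all_order all_algebra finmap.
From mathcomp Require Import complex Rstruct.
From Stdlib Require Reals.

Set Implicit Arguments.
Unset Strict Implicit.
Unset Printing Implicit Defensive.

Import Order.TTheory GRing.Theory Num.Theory.
Local Open Scope fset_scope.
Local Open Scope ring_scope.

Definition CC : fieldType := (Rdefinitions.R)[i].

Definition total_order_on (A : Type) (P : A -> Prop) (le : A -> A -> bool) :=
  [/\ (forall a, P a -> le a a),
      (forall a b, P a -> P b -> le a b -> le b a -> a = b),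
      (forall a b c, P a -> P b -> P c -> le a b -> le b c -> le a c)
    & (forall a b, P a -> P b -> le a b || le b a)].

Definition strict (A : eqType) (le : A -> A -> bool) : A -> A -> bool :=
  fun a b => le a b && (a != b).

Section Gas.
Variables (T : choiceType) (C : fieldType).

Definition fpow (f : T -> C) (X : {fset T}) : C := \prod_(y <- X) f y.

Definition cond_int (V : {fset T} -> C) (X B : {fset T}) : C :=
  if X `&` B == fset0 then \prod_(D <- fpowerset B) V (X `|` D)
  else if has (fun y => X == [fset y]) B then 0
  else 1.

Definition kappa (V : {fset T} -> C) (X B : {fset T}) : C :=
  \prod_(S <- fpowerset X | S != fset0) cond_int V S B.

Definition Zpart (z : T -> C) (V : {fset T} -> C) (X L B : {fset T}) : C :=
  \sum_(Y <- fpowerset (L `\` X)) fpow z (X `|` Y) * kappa V (X `|` Y) B.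

Definition Zfun (z : T -> C) (V : {fset T} -> C) (L B : {fset T}) : C :=
  Zpart z V fset0 L B.

(* correlation R(X, Lambda | B) (field division; only used where the
   denominator is nonzero or the convention "product = 0" applies) *)
Definition Rcorr (z : T -> C) (V : {fset T} -> C) (X L B : {fset T}) : C :=
  Zpart z V X L B / Zfun z V L B.

Definition zhat (z : T -> C) (V : {fset T} -> C) (y : T) (L B : {fset T}) : C :=
  Rcorr z V [fset y] L B.

Definition WX (lt : {fset T} -> {fset T} -> bool) (W : {fset T} -> C)
  (x : T) (X Y : {fset T}) : C :=
  if (x \notin Y) && lt (x |` Y) X then W Y * W (x |` Y)
  else if (x \in Y) && (Y != X) then 1
  else W Y.

Definition Xprec (ordX : {fset T} -> T -> T -> bool) (x : T) (X : {fset T})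
  (x' : T) : {fset T} :=
  [fset y in X `\ x | strict (ordX X) y x'].

End Gas.

From mathcomp Require Import all_boot all_order all_algebra finmap ring.
Import GRing.Theory.
Local Open Scope fset_scope.
Local Open Scope ring_scope.
Set Implicit Arguments. Unset Strict Implicit. Unset Printing Implicit Defensive.

(* Summing out the site x gives Z({x}, Lam) = z(x) W(x) Z_{Wx Fx}(Lam), where the
   interaction Wx D multiplies W(Y) by W(x u Y) whenever x u Y is in D.  Switching on
   the sets X of Fx one at a time, in the order le, multiplies the partition function
   by 1 + (W(X) - 1) Z_X(X', Lam) / Z_X(Lam): on subsets of Lam, W_X is Wx of the sets
   below X.  Finally Z_X(X', Lam) / Z_X(Lam) telescopes along the order on X', because
   conditioning on B gives Z(B u {m}, L) / Z(B, L) = zhat / (1 + zhat) with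
   zhat = zhat(m, L \ m | B). *)

Section BigFpowerset.
Variables (K : choiceType) (R : Type) (idx : R) (op : Monoid.com_law idx).
Implicit Types (a : K) (A B L S : {fset K}) (F : {fset K} -> R).

Lemma big_fpowerset_supset A L F : A `<=` L ->
  \big[op/idx]_(Y <- fpowerset L | A `<=` Y) F Y =
  \big[op/idx]_(Y <- fpowerset (L `\` A)) F (A `|` Y).
Proof.
move=> AL; rewrite big_fset_condE.
have -> : [fset Y in fpowerset L | A `<=` Y] = [fset A `|` Y | Y in fpowerset (L `\` A)].
  apply/fsetP => Y; rewrite !inE /= fpowersetE; apply/andP/imfsetP => /= [[YL AY]|].
    exists (Y `\` A); first by rewrite fpowersetE fsetSD.
    by apply/fsetP => y; rewrite !inE; case: (boolP (y \in A)) => // /(fsubsetP AY).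
  by move=> [Y0 + ->]; rewrite fpowersetCE fsubUset AL fsubsetUl => /andP[->].
rewrite big_imfset // => Y1 Y2 /=; rewrite !fpowersetCE => /andP[_ dis1] /andP[_ dis2].
move/(congr1 (fsetD^~ A)); rewrite !fsetDUl fsetDv !fset0U.
by rewrite (fsetDidPl _ _ dis1) (fsetDidPl _ _ dis2).
Qed.

Lemma big_fpowersetU1 a S F : a \notin S ->
  \big[op/idx]_(Y <- fpowerset (a |` S)) F Y =
  op (\big[op/idx]_(Y <- fpowerset S) F Y) (\big[op/idx]_(Y <- fpowerset S) F (a |` Y)).
Proof.
move=> aS; rewrite (big_fsetID _ (fun Y : {fset K} => a \notin Y)) /=; congr (op _ _).
  apply: eq_fbigl => Y; rewrite !inE /= !fpowersetE.
  apply/andP/idP => [[/fsubsetP YaS aY]|YS].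
    apply/fsubsetP => y yY; move: (YaS y yY); rewrite !inE => /orP[/eqP ya|//].
    by move: aY; rewrite -ya yY.
  rewrite (fsubset_trans YS (fsubsetU1 _ _)); split=> //.
  by apply: contra aS => /(fsubsetP YS).
rewrite -big_fset_condE; under eq_bigl do rewrite negbK -fsub1set.
by rewrite big_fpowerset_supset ?fsub1set ?fset1U1 // fsetU1K.
Qed.

Lemma big_fpowersetU B S F : [disjoint S & B]%fset ->
  \big[op/idx]_(Y <- fpowerset (S `|` B)) F Y =
  \big[op/idx]_(Y <- fpowerset S) \big[op/idx]_(D <- fpowerset B) F (Y `|` D).
Proof.
elim/fset1U_rect: S F => [|a S aS IH] F.
  by rewrite fset0U fpowerset0 big_seq_fset1 => _; under [RHS]eq_bigr do rewrite fset0U.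
rewrite fdisjointU1X => /andP[aB dis].
rewrite -fsetUA !big_fpowersetU1 ?inE ?negb_or ?aS ?aB // !IH //; congr (op _ _).
by apply: eq_bigr => Y _; apply: eq_bigr => D _; rewrite fsetUA.
Qed.

Lemma big_fpowerset_disjoint B L F :
  (forall Y, Y `<=` L -> ~~ [disjoint Y & B]%fset -> F Y = idx) ->
  \big[op/idx]_(Y <- fpowerset L) F Y = \big[op/idx]_(Y <- fpowerset (L `\` B)) F Y.
Proof.
move=> F_meet; symmetry; apply: big_fset_incl; first by rewrite fpowersetS fsubsetDl.
by move=> Y; rewrite fpowersetCE fpowersetE => YL; rewrite YL; apply: F_meet.
Qed.

End BigFpowerset.

Section TotalOrder.
Variables (K : choiceType) (P : K -> Prop) (le : K -> K -> bool).
Hypothesis le_total : total_order_on P le.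

Lemma fset_max (A : {fset K}) : A != fset0 -> (forall a, a \in A -> P a) ->
  exists2 m, m \in A & forall a, a \in A -> le a m.
Proof.
have [le_refl _ le_trans le_tot] := le_total.
elim/fset1U_rect: A => [|a A aA IH] // _ PA.
have Pa : P a by apply: PA; rewrite fset1U1.
have [A0|A0] := eqVneq (A : {fset K}) fset0.
  exists a => [|b]; first exact: fset1U1.
  by rewrite A0 fsetU0 inE => /eqP ->; apply: le_refl.
have PA' b : b \in A -> P b by move=> bA; apply: PA; rewrite fset1Ur.
have [m mA m_max] := IH A0 PA'.
have [am|ma] := orP (le_tot a m Pa (PA' m mA)).
  exists m => [|b]; first by rewrite fset1Ur.
  by case/fset1UP => [->|/m_max].
exists a => [|b]; first exact: fset1U1.
case/fset1UP => [->|bA]; first exact: le_refl.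
exact: le_trans (PA' b bA) (PA' m mA) Pa (m_max b bA) ma.
Qed.

Lemma below_below (A : {fset K}) m m' :
  (forall a, a \in A -> P a) -> m \in A -> m' \in [fset y in A | strict le y m] ->
  [fset y in [fset y in A | strict le y m] | strict le y m'] =
  [fset y in A | strict le y m'].
Proof.
have [_ le_anti le_trans _] := le_total.
move=> PA mA; rewrite !inE => /andP[m'A /andP[m'm m'_neq_m]].
apply/fsetP => y; rewrite !inE; apply/andP/andP => [[/andP[yA _] //]|[yA]].
move=> y_m'; split=> //; move: y_m'; rewrite /strict yA => /andP[ym' _].
have [Py Pm' Pm] := And3 (PA y yA) (PA m' m'A) (PA m mA).
rewrite (le_trans y m' m Py Pm' Pm ym' m'm) /=; apply: contra m'_neq_m => /eqP yE.
by apply/eqP/le_anti => //; rewrite -yE.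
Qed.

Lemma big_telescope_total (R : Type) (idx : R) (op : Monoid.com_law idx)
    (g : {fset K} -> R) (f : K -> R) (A : {fset K}) :
  (forall a, a \in A -> P a) ->
  (forall m, m \in A -> g (m |` [fset y in A | strict le y m]) =
                        op (g [fset y in A | strict le y m]) (f m)) ->
  g A = op (g fset0) (\big[op/idx]_(a <- A) f a).
Proof.
elim/finSet_rect: A => A IH PA g_step.
have [->|A0] := eqVneq A fset0; first by rewrite big_seq_fset0 Monoid.mulm1.
have [m mA m_max] := fset_max A0 PA.
set B := [fset y in A | strict le y m] in g_step *.
have mB : m \notin B by rewrite !inE /strict eqxx !andbF.
have AmB : A = m |` B.
  apply/fsetP => y; rewrite !inE /strict; case: (eqVneq y m) => [->|] //=.
  by move=> _; apply/idP/and3P => [yA|[]//]; split=> //; apply: m_max.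
have PB b : b \in B -> P b by rewrite !inE => /andP[/PA].
rewrite {1}AmB g_step // (IH B) //.
- by rewrite AmB big_fsetU1 // -Monoid.mulmA [op (f m) _]Monoid.mulmC.
- by rewrite AmB fproperUr ?fsub1set.
move=> m' m'B; rewrite !below_below //; apply: g_step.
by move: m'B; rewrite !inE => /andP[].
Qed.

End TotalOrder.

Section PartitionFunctions.
Variables (T : choiceType) (C : fieldType) (z : T -> C).
Implicit Types (a : T) (A : {fset T}) (V : {fset T} -> C) (B D L X Y : {fset T}).

Lemma fpowU B Y : [disjoint B & Y]%fset -> fpow z (B `|` Y) = fpow z B * fpow z Y.
Proof.
elim/fset1U_rect: Y => [|a Y aY IH]; first by rewrite fsetU0 /fpow big_seq_fset0 mulr1.
rewrite fdisjointXU fdisjointX1 => /andP[aB dis].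
rewrite fsetUCA /fpow !big_fsetU1 ?inE ?negb_or ?aB //.
by rewrite -[\big[_/_]_(i <- B `|` Y) _]/(fpow z (B `|` Y)) IH // mulrCA.
Qed.

Lemma cond_int0 V S : cond_int V S fset0 = V S.
Proof. by rewrite /cond_int fsetI0 eqxx fpowerset0 big_seq_fset1 fsetU0. Qed.

Lemma kappa0E V X : kappa V X fset0 = \prod_(S <- fpowerset X | S != fset0) V S.
Proof. by apply: eq_bigr => S _; rewrite cond_int0. Qed.

Lemma kappa_ext V V' X :
  (forall S, S `<=` X -> S != fset0 -> V S = V' S) -> kappa V X fset0 = kappa V' X fset0.
Proof.
move=> VV'; rewrite !kappa0E big_seq_cond [RHS]big_seq_cond.
by apply: eq_bigr => S /andP[]; rewrite fpowersetE; apply: VV'.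
Qed.

Lemma Zpart_ext V V' X L : X `<=` L ->
  (forall S, S `<=` L -> S != fset0 -> V S = V' S) ->
  Zpart z V X L fset0 = Zpart z V' X L fset0.
Proof.
move=> XL VV'; rewrite /Zpart big_seq [RHS]big_seq; apply: eq_bigr => Y.
rewrite fpowersetCE => /andP[YL _]; congr (_ * _); apply: kappa_ext => S SXY.
by apply: VV'; rewrite (fsubset_trans SXY) // fsubUset XL.
Qed.

Lemma fset1U_neq0 a A : a |` A != fset0.
Proof. by apply/fset0Pn; exists a; apply: fset1U1. Qed.

Lemma kappaU1 V x Y : x \notin Y ->
  kappa V (x |` Y) fset0 =
  V [fset x] * kappa V Y fset0 * \prod_(S <- fpowerset Y | S != fset0) V (x |` S).
Proof.
move=> xY; rewrite !kappa0E big_mkcond big_fpowersetU1 //= -big_mkcond.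
rewrite [X in _ * X = _](eq_bigr (fun S => V (x |` S))); last first.
  by move=> S _; rewrite ifT //; apply: fset1U_neq0.
rewrite (big_fsetD1 fset0) ?fpowersetE ?fsub0set //= fsetU0 mulrCA mulrA.
by congr (_ * _); apply: eq_fbigl_cond => S; rewrite !inE andbT andbC.
Qed.

Lemma kappa_disjointU V B Y : [disjoint Y & B]%fset ->
  kappa V (B `|` Y) fset0 = kappa V B fset0 * kappa V Y B.
Proof.
move=> dis; rewrite !kappa0E big_mkcond fsetUC big_fpowersetU //=.
rewrite (big_fsetD1 fset0) ?fpowersetE ?fsub0set //=; congr (_ * _).
  by rewrite [RHS]big_mkcond; apply: eq_bigr => S _; rewrite fset0U.
apply: eq_fbig_cond => [S|S]; first by rewrite !inE andbT andbC.
rewrite !inE fpowersetE => /andP[S0 SY] _.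
have SB : S `&` B == fset0.
  by rewrite -/(fdisjoint S B) (fdisjointWl SY dis).
rewrite /cond_int SB; apply: eq_bigr => D _; rewrite ifT //.
by move: S0; apply: contra; rewrite fsetU_eq0 => /andP[].
Qed.

Lemma kappa_update V V' X A c : A != fset0 ->
  (forall S, S `<=` X -> S != fset0 -> V' S = V S * (if S == A then c else 1)) ->
  kappa V' X fset0 = kappa V X fset0 * (if A `<=` X then c else 1).
Proof.
move=> A0 VV'; rewrite !kappa0E big_seq_cond.
rewrite (eq_bigr (fun S => V S * (if S == A then c else 1))); last first.
  by move=> S /andP[]; rewrite fpowersetE; apply: VV'.
rewrite big_split /= -big_seq_cond; congr (_ * _).
rewrite -big_mkcondr big_fset_condE.
have -> : [fset S in fpowerset X | (S \in fpowerset X) && (S != fset0) && (S == A)] =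
          if A `<=` X then [fset A] else fset0.
  apply/fsetP => S; rewrite !inE fpowersetE.
  by case: (eqVneq S A) => [->|/negbTE SA]; case: ifP => AX; rewrite ?inE ?SA ?AX ?A0 ?andbF ?eqxx.
by case: ifP; rewrite ?big_seq_fset1 ?big_seq_fset0.
Qed.

Lemma kappa_meet V Y B y : y \in Y -> y \in B -> kappa V Y B = 0.
Proof.
move=> yY yB; rewrite /kappa big_mkcond (big_fsetD1 [fset y]) /=; last first.
  by rewrite fpowersetE fsub1set.
rewrite ifT; last by apply/fset0Pn; exists y; rewrite inE.
rewrite /cond_int ifF ?ifT ?mul0r //; first by apply/hasP; exists y.
by apply/negbTE/fset0Pn; exists y; rewrite !inE eqxx.
Qed.

Lemma Zpart_restrict V X L B :
  Zpart z V X L B =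
  \sum_(Y <- fpowerset (L `\` X `\` B)) fpow z (X `|` Y) * kappa V (X `|` Y) B.
Proof.
rewrite /Zpart (big_fpowerset_disjoint _ (B := B)) // => Y _.
case/fset0Pn => y; rewrite inE => /andP[yY yB].
by rewrite (@kappa_meet _ _ _ y) ?mulr0 // inE yY orbT.
Qed.

Lemma Zpart_condition V B D L : [disjoint B & D]%fset ->
  Zpart z V (B `|` D) L fset0 = fpow z B * kappa V B fset0 * Zpart z V D L B.
Proof.
move=> disBD; rewrite (Zpart_restrict V D L B) /Zpart fsetDDl [D `|` B]fsetUC big_distrr /=.
apply: eq_big_seq => Y; rewrite fpowersetCE fdisjointXU => /andP[_ /andP[disYB disYD]].
rewrite -fsetUA fpowU ?kappa_disjointU 1?mulrACA //.
  by rewrite fdisjointUX disYB andbT fdisjoint_sym.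
by rewrite fdisjointXU disBD fdisjoint_sym.
Qed.

Lemma Zfun_split1 V L B m : m \in L ->
  Zfun z V L B = Zfun z V (L `\ m) B + Zpart z V [fset m] (L `\ m) B.
Proof.
move=> mL; rewrite /Zfun /Zpart !fsetD0 fsetDDl fsetUid -{1}(fsetD1K mL).
rewrite big_fpowersetU1 ?fsetD11 //; congr (_ + _).
by apply: eq_bigr => Y _; rewrite fset0U.
Qed.

Lemma Zpart_prod_zhat V L A (ord : T -> T -> bool) : A `<=` L ->
  total_order_on (fun y => y \in A) ord ->
  (forall a, a \in A ->
     Zfun z V (L `\ a) [fset y in A | strict ord y a] != 0 /\
     zhat z V a (L `\ a) [fset y in A | strict ord y a] != -1) ->
  Zpart z V A L fset0 = Zfun z V L fset0 *
    \prod_(a <- A) (zhat z V a (L `\ a) [fset y in A | strict ord y a] /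
                    (1 + zhat z V a (L `\ a) [fset y in A | strict ord y a])).
Proof.
move=> AL ord_tot nondeg.
apply: (big_telescope_total ord_tot (g := fun B => Zpart z V B L fset0)) => // m mA /=.
set B := [fset y in A | strict ord y m] in nondeg *.
have [n_neq0 zhat_neq] := nondeg m mA.
have mB : m \notin B by rewrite !inE /strict eqxx !andbF.
have mL : m \in L by apply: (fsubsetP AL).
rewrite fsetUC -{2}[B]fsetU0 !Zpart_condition ?fdisjointX1 ?fdisjointX0 //.
have -> : Zpart z V [fset m] L B = Zpart z V [fset m] (L `\ m) B.
  by rewrite /Zpart fsetDDl fsetUid.
rewrite [Zpart z V fset0 L B](Zfun_split1 _ _ mL).
move: n_neq0 zhat_neq; rewrite /zhat /Rcorr.
set n := Zfun _ _ _ _; set q := Zpart _ _ _ _ _ => n_neq0 zhat_neq.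
have nq_neq0 : n + q != 0.
  by apply: contra zhat_neq => /eqP nq0; rewrite -(addKr n q) nq0 addr0 mulNr divff.
by field; rewrite n_neq0 nq_neq0.
Qed.

End PartitionFunctions.

Section EffectiveActivity.
Variables (T : choiceType) (C : fieldType) (z : T -> C) (W : {fset T} -> C).
Variables (x : T) (Lam : {fset T}).
Hypothesis xLam : x \notin Lam.

Definition Fx : {fset {fset T}} :=
  [fset X in fpowerset (x |` Lam) | (x \in X) && (X != [fset x])].

Definition Wx (D : {fset {fset T}}) (Y : {fset T}) : C :=
  if x |` Y \in D then W Y * W (x |` Y) else W Y.

Lemma notin_sub_Lam Y : Y `<=` Lam -> x \notin Y.
Proof. by move=> YL; apply: contra xLam => /(fsubsetP YL). Qed.

Lemma fset1U_in_Fx S : S `<=` Lam -> S != fset0 -> x |` S \in Fx.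
Proof.
move=> SL S0; rewrite !inE fpowersetE eqxx fsetUS //=.
apply: contra S0 => /eqP xS_x; apply/eqP.
by rewrite -(fsetU1K (notin_sub_Lam SL)) xS_x fsetDv.
Qed.

Lemma in_Fx X : X \in Fx -> [/\ x \in X, X `\ x `<=` Lam & X `\ x != fset0].
Proof.
rewrite !inE fpowersetE => /andP[XL /andP[xX X_neq]]; split=> //.
  by rewrite fsubDset.
by apply: contra X_neq => /eqP X'0; rewrite -(fsetD1K xX) X'0 fsetU0.
Qed.

Lemma Zfun_Wx0 : Zfun z (Wx fset0) Lam fset0 = Zfun z W Lam fset0.
Proof. by apply: Zpart_ext => [|S _ _]; rewrite ?fsub0set // /Wx inE. Qed.

Lemma kappa_WxFx Y : Y `<=` Lam ->
  kappa (Wx Fx) Y fset0 =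
  kappa W Y fset0 * \prod_(S <- fpowerset Y | S != fset0) W (x |` S).
Proof.
move=> YL; rewrite !kappa0E -big_split big_seq_cond [RHS]big_seq_cond /=.
apply: eq_bigr => S /andP[]; rewrite fpowersetE => SY S0.
by rewrite /Wx fset1U_in_Fx // (fsubset_trans SY YL).
Qed.

Lemma Zpart_x : Zpart z W [fset x] Lam fset0 = z x * W [fset x] * Zfun z (Wx Fx) Lam fset0.
Proof.
rewrite /Zfun /Zpart (mem_fsetD1 xLam) fsetD0 big_distrr /=; apply: eq_big_seq => Y.
rewrite fpowersetE => YL; have xY := notin_sub_Lam YL.
rewrite fset0U /fpow big_fsetU1 //= -/(fpow z Y) kappaU1 // kappa_WxFx //; ring.
Qed.

Lemma Wx_U1 D m S : m \in Fx -> m \notin D -> S `<=` Lam ->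
  Wx (m |` D) S = Wx D S * (if S == m `\ x then W m else 1).
Proof.
move=> /in_Fx[xm _ _] mD SL; have xS := notin_sub_Lam SL.
rewrite /Wx in_fset1U.
have -> : (x |` S == m) = (S == m `\ x).
  by apply/eqP/eqP => [<-|->]; [rewrite fsetU1K | rewrite fsetD1K].
case: (eqVneq S (m `\ x)) => [->|_] /=; last by rewrite mulr1.
by rewrite fsetD1K // (negbTE mD).
Qed.

Lemma Zfun_Wx_U1 D m : m \in Fx -> m \notin D ->
  Zfun z (Wx (m |` D)) Lam fset0 =
  Zfun z (Wx D) Lam fset0 + (W m - 1) * Zpart z (Wx D) (m `\ x) Lam fset0.
Proof.
move=> mFx mD; have [_ m'L m'0] := in_Fx mFx.
rewrite /Zpart -(big_fpowerset_supset _ (fun Y => fpow z Y * kappa (Wx D) Y fset0) m'L).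
rewrite /Zfun /Zpart fsetD0 big_distrr /= [X in _ = _ + X]big_mkcond -big_split /=.
apply: eq_big_seq => Y; rewrite fpowersetE => YL.
rewrite !fset0U (kappa_update (V := Wx D) (A := m `\ x) (c := W m)) //.
  by case: ifP => _; ring.
by move=> S SY _; apply: Wx_U1 => //; apply: fsubset_trans SY YL.
Qed.

Lemma prod_Fx (f : {fset T} -> C) :
  \prod_(X <- fpowerset (x |` Lam) | x \in X) f X = f [fset x] * \prod_(X <- Fx) f X.
Proof.
rewrite big_fset_condE (big_fsetD1 [fset x]); last first.
  by rewrite !inE fpowersetE fsub1set fset1U1 eqxx.
by congr (_ * _); apply: eq_fbigl => X; rewrite !inE andbC andbA.
Qed.

Variables (le : {fset T} -> {fset T} -> bool) (ordX : {fset T} -> T -> T -> bool).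

Definition zhatX X x' := zhat z (WX (strict le) W x X) x' (Lam `\ x') (Xprec ordX x X x').

Definition factor X := 1 + (W X - 1) * \prod_(x' <- X `\ x) (zhatX X x' / (1 + zhatX X x')).

Lemma Zfun_Wx_step m : m \in Fx ->
  total_order_on (fun y => y \in m `\ x) (ordX m) ->
  (W m != 1 -> forall x', x' \in m `\ x ->
     Zfun z (WX (strict le) W x m) (Lam `\ x') (Xprec ordX x m x') != 0 /\
     zhatX m x' != -1) ->
  Zfun z (Wx (m |` [fset X in Fx | strict le X m])) Lam fset0 =
  Zfun z (Wx [fset X in Fx | strict le X m]) Lam fset0 * factor m.
Proof.
move=> mFx ord_tot nondeg; set B := [fset X in Fx | strict le X m].
have mB : m \notin B by rewrite !inE /strict eqxx !andbF.
have [_ m'L _] := in_Fx mFx.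
have WX_Wx S : S `<=` Lam -> S != fset0 -> WX (strict le) W x m S = Wx B S.
  move=> SL S0; rewrite /WX /Wx (negbTE (notin_sub_Lam SL)) /=.
  by move: (fset1U_in_Fx SL S0); rewrite /B !inE => ->.
rewrite Zfun_Wx_U1 // /factor.
have [->|Wm_neq1] := eqVneq (W m) 1; first by rewrite subrr !mul0r !addr0 mulr1.
rewrite -(Zpart_ext _ m'L WX_Wx) (Zpart_prod_zhat m'L ord_tot (nondeg Wm_neq1)).
by rewrite /Zfun (Zpart_ext _ (fsub0set _) WX_Wx); ring.
Qed.

Lemma zhat_eq_prod_factor :
  total_order_on (fun X : {fset T} => x \in X) le ->
  (forall X, x \in X -> total_order_on (fun y => y \in X `\ x) (ordX X)) ->
  Zfun z W Lam fset0 != 0 ->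
  (z x * W [fset x] != 0 -> forall X, x \in X -> W X != 1 -> X `\ x `<=` Lam ->
     forall x', x' \in X `\ x ->
       Zfun z (WX (strict le) W x X) (Lam `\ x') (Xprec ordX x X x') != 0 /\
       zhatX X x' != -1) ->
  zhat z W x Lam fset0 = z x * \prod_(X <- fpowerset (x |` Lam) | x \in X) factor X.
Proof.
move=> le_tot ordX_tot Z_neq0 nondeg.
have factor_x : factor [fset x] = W [fset x].
  by rewrite /factor fsetDv big_seq_fset0 mulr1 addrC subrK.
rewrite prod_Fx factor_x /zhat /Rcorr Zpart_x -Zfun_Wx0.
have [zW0|zW_neq0] := eqVneq (z x * W [fset x]) 0.
  by rewrite zW0 !mul0r mulrA zW0 mul0r.
have Z_Fx : Zfun z (Wx Fx) Lam fset0 =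
             Zfun z (Wx fset0) Lam fset0 * \prod_(X <- Fx) factor X.
  apply: (big_telescope_total le_tot (g := fun D => Zfun z (Wx D) Lam fset0)).
    by move=> X /in_Fx[].
  move=> m mFx; have [xm m'L _] := in_Fx mFx.
  by apply: Zfun_Wx_step => [||Wm_neq1]; [|apply: ordX_tot|apply: nondeg].
by rewrite Z_Fx; field; rewrite Zfun_Wx0.
Qed.

End EffectiveActivity.

Theorem proposition4p5 (T : countType) (z : T -> CC) (W : {fset T} -> CC)
  (x : T) (Lam : {fset T}) (le : {fset T} -> {fset T} -> bool)
  (E : {fset T} -> Prop) (ordX : {fset T} -> T -> T -> bool) :
  x \notin Lam ->
  total_order_on (fun X : {fset T} => x \in X) le ->
  (forall X, E X -> x \in X) ->
  (forall X, x \in X -> W X != 1 -> X `\ x `<=` Lam -> E X) ->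
  (forall X, x \in X -> total_order_on (fun y => y \in X `\ x) (ordX X)) ->
  Zfun z W Lam fset0 != 0 ->
  (z x * W [fset x] != 0 ->
     forall X, E X -> forall x', x' \in X `\ x ->
       Zfun z (WX (strict le) W x X) (Lam `\ x') (Xprec ordX x X x') != 0 /\
       zhat z (WX (strict le) W x X) x' (Lam `\ x') (Xprec ordX x X x') != -1) ->
  zhat z W x Lam fset0 =
  z x * \prod_(X <- fpowerset (x |` Lam) | x \in X)
          (1 + (W X - 1) *
             \prod_(x' <- X `\ x)
               (zhat z (WX (strict le) W x X) x' (Lam `\ x') (Xprec ordX x X x') /
                (1 + zhat z (WX (strict le) W x X) x' (Lam `\ x') (Xprec ordX x X x')))).
Proof.
move=> xLam le_tot _ E_of ordX_tot Z_neq0 nondeg.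
apply: zhat_eq_prod_factor => // zW_neq0 X xX WX_neq1 X'Lam.
by apply: nondeg => //; apply: E_of.
Qed.
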